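(* Assume $\mathcal M$ satisfies extensibility. Let $\lambda\in\mathbb R^A$, $\lambda>0$, and partition $A$ by equality of $\lambda_i$ into $S_1,\dots,S_d$ with $\lambda(S_1)<\dots<\lambda(S_d)$. Let $R\subseteq S_d$, let $\hat X$ be an optimal solution of $LP(\lambda)$ that is jointly optimal for $R$, and let $(\hat\alpha,\hat p)$ be an optimal solution of $DLP(\lambda)$. For $a>0$ let $\lambda'=\lambda+a\mathbf 1_R$. Then $\hat X$ is optimal for $LP(\lambda')$, and there exists an optimal solution $(\alpha',p')$ of $DLP(\lambda')$ such that: $p'_j\ge\hat p_j$ for all $j\in G$; $p'_j=\hat p_j$ for every $j$ with $\sum_{i\notin R}\hat x_{ij}>0$; and $\alpha'_{ik}=\hat\alpha_{ik}$ for all $i\notin R$ and all $k\in C$.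
   Context: A market $\mathcal M$: finite agent set $A$, finite goods set $G$ (supply $1$ each), finite index set $C$; agent $i$ has real coefficients $a_{ijk}$, requirements $r_{ik}\ge0$, delays $d_{ij}\ge0$. CC$(i)$: $\sum_ja_{ijk}x_{ij}\ge r_{ik}$ for all $k$, $x_{ij}\ge0$. An allocation $X\ge0$ is supply respecting if $\sum_ix_{ij}\le1$ for all $j$. For $S\subseteq A$, $X$ is jointly optimal for $S$ if it satisfies CC$(i)$ for all $i\in S$, is supply respecting, and minimizes $\sum_{i\in S}\sum_jd_{ij}x_{ij}$ among such allocations. Extensibility: for every $S\subset A$, every $X$ jointly optimal for $S$ and every $i\in A\setminus S$, there is $X'$ jointly optimal for $S\cup\{i\}$ with $\sum_jd_{i'j}x'_{i'j}=\sum_jd_{i'j}x_{i'j}$ for all $i'\in S$. $LP(\lambda)$: minimize $\sum_i\lambda_i\sum_jd_{ij}x_{ij}$ s.t. $\sum_ja_{ijk}x_{ij}\ge r_{ik}$ for all $(i,k)$, $\sum_ix_{ij}\le1$ for all $j$, $x\ge0$. $DLP(\lambda)$: maximize $\sum_{i,k}r_{ik}\alpha_{ik}-\sum_jp_j$ s.t. $\lambda_id_{ij}\ge\sum_ka_{ijk}\alpha_{ik}-p_j$ for all $(i,j)$, $\alpha,p\ge0$. $\lambda(S)$ is the common value of $\lambda_i$ on $S$; $\mathbf 1_R\in\{0,1\}^A$ is the indicator vector of $R$. *)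

From HB Require Import structures.
From mathcomp Require Import all_boot all_order all_algebra.
Set Implicit Arguments. Unset Strict Implicit. Unset Printing Implicit Defensive.
Import Order.TTheory GRing.Theory Num.Theory.
Local Open Scope ring_scope.

Section Market.
Variables (R : realFieldType) (A G C : finType).
(* coef i j k = a_{ijk}, req i k = r_{ik}, delay i j = d_{ij} *)
Variables (coef : A -> G -> C -> R) (req : A -> C -> R) (delay : A -> G -> R).

Definition agent_cost (X : A -> G -> R) (i : A) : R :=
  \sum_(j : G) delay i j * X i j.

Definition CC (i : A) (X : A -> G -> R) : Prop :=
  (forall k : C, req i k <= \sum_(j : G) coef i j k * X i j) /\
  (forall j : G, 0 <= X i j).

Definition supply_respecting (X : A -> G -> R) : Prop :=
  (forall i j, 0 <= X i j) /\ (forall j : G, \sum_(i : A) X i j <= 1).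

Definition jointly_optimal (S : {set A}) (X : A -> G -> R) : Prop :=
  [/\ (forall i, i \in S -> CC i X), supply_respecting X &
      forall Y : A -> G -> R, (forall i, i \in S -> CC i Y) -> supply_respecting Y ->
        \sum_(i in S) agent_cost X i <= \sum_(i in S) agent_cost Y i].

Definition extensibility : Prop :=
  forall (S : {set A}) (X : A -> G -> R), jointly_optimal S X ->
  forall i : A, i \notin S ->
  exists X' : A -> G -> R, jointly_optimal (i |: S) X' /\
    forall i', i' \in S -> agent_cost X' i' = agent_cost X i'.

Definition LP_feasible (X : A -> G -> R) : Prop :=
  (forall i k, req i k <= \sum_(j : G) coef i j k * X i j) /\ supply_respecting X.

Definition LP_obj (lam : A -> R) (X : A -> G -> R) : R :=
  \sum_(i : A) lam i * agent_cost X i.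

Definition LP_optimal (lam : A -> R) (X : A -> G -> R) : Prop :=
  LP_feasible X /\ forall Y, LP_feasible Y -> LP_obj lam X <= LP_obj lam Y.

Definition DLP_feasible (lam : A -> R) (alpha : A -> C -> R) (p : G -> R) : Prop :=
  [/\ (forall i j, \sum_(k : C) coef i j k * alpha i k - p j <= lam i * delay i j),
      (forall i k, 0 <= alpha i k) & (forall j, 0 <= p j)].

Definition DLP_obj (alpha : A -> C -> R) (p : G -> R) : R :=
  \sum_(i : A) \sum_(k : C) req i k * alpha i k - \sum_(j : G) p j.

Definition DLP_optimal (lam : A -> R) (alpha : A -> C -> R) (p : G -> R) : Prop :=
  DLP_feasible lam alpha p /\
  forall alpha0 p0, DLP_feasible lam alpha0 p0 -> DLP_obj alpha0 p0 <= DLP_obj alpha p.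

End Market.

Definition top_class (R : realFieldType) (A : finType) (lam : A -> R) : {set A} :=
  [set i | [forall i', lam i' <= lam i]].

Definition lam_shift (R : realFieldType) (A : finType) (lam : A -> R) (a : R) (Rs : {set A})
  : A -> R := fun i => lam i + (if i \in Rs then a else 0).

From HB Require Import structures.
From mathcomp Require Import all_boot all_order all_algebra.
From mathcomp Require Import ring lra.
Set Implicit Arguments. Unset Strict Implicit. Unset Printing Implicit Defensive.
Import Order.TTheory GRing.Theory Num.Theory.
Local Open Scope ring_scope.

(* With lam' = lam + a 1_Rs the primal objective splits as the lam-objective plus
   a times the cost of the agents of Rs.  Xh minimizes the first term (it is optimal
   for LP(lam)) and the second (it is jointly optimal for Rs), hence is optimal for
   lam'.  For the dual, let (beta, q) be an optimal dual solution of the problem of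
   serving the agents of Rs alone, with supply constraints only on the goods nobody
   outside Rs uses; Xh restricted to Rs is optimal for it, because small convex
   steps from Xh towards any of its feasible points remain jointly feasible for Rs.
   Then beta vanishes outside Rs, q vanishes on the goods used outside Rs, and
   (alphah + a beta, ph + a q) closes the duality gap of LP(lam') by adding up the
   two strong-duality inequalities.  Strong LP duality is derived from Farkas'
   lemma, proved by Fourier-Motzkin elimination. *)

Section Sums.
Variable R : comPzRingType.

Lemma sum_delta (I : finType) (i0 : I) (F : I -> R) :
  \sum_i (i == i0)%:R * F i = F i0.
Proof.
by rewrite (bigD1 i0) //= eqxx mul1r big1 ?addr0 // => i /negbTE->; rewrite mul0r.
Qed.

Lemma sum_comb_mulA (K I : finType) (y : K -> R) (W : K -> I -> R) (F : I -> R) :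
  \sum_i (\sum_k y k * W k i) * F i = \sum_k y k * \sum_i W k i * F i.
Proof.
under eq_bigr do rewrite mulr_suml.
rewrite exchange_big; apply: eq_bigr => k _; rewrite mulr_sumr.
by apply: eq_bigr => i _; rewrite mulrA.
Qed.

Lemma sum_pair (T1 T2 : finType) (F : T1 * T2 -> R) :
  \sum_p F p = \sum_a \sum_b F (a, b).
Proof. by rewrite pair_bigA; apply: eq_bigr => -[]. Qed.

Lemma sum_mul_lincomb (T : finType) (f u v : T -> R) (s t : R) :
  \sum_x f x * (s * u x + t * v x) = s * \sum_x f x * u x + t * \sum_x f x * v x.
Proof.
rewrite !mulr_sumr -big_split; apply: eq_bigr => x _.
by rewrite mulrDr (mulrCA (f x) s) (mulrCA (f x) t).
Qed.

Lemma sum_mul_addZ (T : finType) (f u v : T -> R) a :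
  \sum_x f x * (u x + a * v x) = \sum_x f x * u x + a * \sum_x f x * v x.
Proof. by rewrite mulr_sumr -big_split; apply: eq_bigr => x _; rewrite mulrDr mulrCA. Qed.

End Sums.

Lemma exists_small_step (R : realFieldType) (I : finType) (P : pred I) (n s : I -> R) :
  (forall i, P i -> 0 < n i) -> (forall i, 0 <= s i) ->
  exists t, [/\ 0 < t, t <= 1 & forall i, P i -> t * s i <= n i].
Proof.
move=> n_gt0 s_ge0.
have ratio_gt0 i : P i -> 0 < n i / (1 + s i).
  by move=> Pi; rewrite divr_gt0 ?n_gt0 ?ltr_wpDr ?ltr01.
exists (\big[Order.min/1]_(i | P i) (n i / (1 + s i))); split.
- exact: lt_bigmin _ ltr01 ratio_gt0.
- exact: bigmin_le_id.
- move=> i Pi; have := bigmin_le_cond 1 (fun i => n i / (1 + s i)) Pi.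
  set t := \big[Order.min/1]_(i | P i) _.
  have t_gt0 : 0 < t := lt_bigmin _ ltr01 ratio_gt0.
  rewrite ler_pdivlMr ?ltr_wpDr ?ltr01 //; have := s_ge0 i; nra.
Qed.

Section FourierMotzkin.
Variable R : realFieldType.

Section Elimination.
Variables (I : finType) (l : I -> R).

(* The rows of the system after eliminating the variable with coefficients [l]:
   the rows with [l i = 0], and for every pair of rows with [l i > 0 > l j] the
   nonnegative combination that cancels that variable. *)
Definition fm_coef (k : I + I * I) (i : I) : R :=
  match k with
  | inl i0 => ((i == i0) && (l i0 == 0))%:R
  | inr (i1, i2) =>
      ((0 < l i1) && (l i2 < 0))%:R * ((i == i1)%:R * - l i2 + (i == i2)%:R * l i1)
  end.

Lemma fm_coef_ge0 k i : 0 <= fm_coef k i.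
Proof.
case: k => [i0|[i1 i2]] /=; first exact: ler0n.
have [/andP[l1 l2]|_] := boolP ((0 < l i1) && (l i2 < 0)); last by rewrite mul0r.
by rewrite mul1r addr_ge0 // mulr_ge0 // ?ler0n // ?oppr_ge0 ltW.
Qed.

Lemma fm_coef_sum_inl i0 (F : I -> R) :
  \sum_i fm_coef (inl i0) i * F i = (l i0 == 0)%:R * F i0.
Proof.
rewrite -(sum_delta i0 (fun i => (l i0 == 0)%:R * F i)).
by apply: eq_bigr => i _ /=; rewrite -mulnb natrM mulrA.
Qed.

Lemma fm_coef_sum_inr i1 i2 (F : I -> R) :
  \sum_i fm_coef (inr (i1, i2)) i * F i =
  ((0 < l i1) && (l i2 < 0))%:R * (- l i2 * F i1 + l i1 * F i2).
Proof.
set c := ((0 < l i1) && (l i2 < 0))%:R.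
transitivity (\sum_i c * ((i == i1)%:R * (- l i2 * F i) + (i == i2)%:R * (l i1 * F i))).
  by apply: eq_bigr => i _ /=; ring.
by rewrite -mulr_sumr big_split /= !sum_delta.
Qed.

Lemma fm_coef_elim k : \sum_i fm_coef k i * l i = 0.
Proof.
case: k => [i0|[i1 i2]]; rewrite ?fm_coef_sum_inl ?fm_coef_sum_inr.
  by case: eqP => [->|]; rewrite ?mulr0 ?mul0r.
by rewrite mulNr [l i1 * _]mulrC addNr mulr0.
Qed.

Lemma fm_scalar_solution (r : I -> R) :
  (forall k, 0 <= \sum_i fm_coef k i * r i) -> exists t, forall i, l i * t <= r i.
Proof.
move=> hk.
have r_ge0 i : l i = 0 -> 0 <= r i.
  by move=> li0; have := hk (inl i); rewrite fm_coef_sum_inl li0 eqxx mul1r.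
have lower_le_upper i j : 0 < l i -> l j < 0 -> r j / l j <= r i / l i.
  move=> li_gt0 lj_lt0; have := hk (inr (i, j)).
  rewrite fm_coef_sum_inr li_gt0 lj_lt0 mul1r => h.
  rewrite ler_ndivrMr // -(ler_pM2l li_gt0).
  have -> : l i * (r i / l i * l j) = r i * l j by field; rewrite gt_eqF.
  lra.
pose upper := \big[Order.min/0]_(i | 0 < l i) (r i / l i).
exists (\big[Order.max/upper]_(j | l j < 0) (r j / l j)) => i.
case: (ltrgtP (l i) 0) => [li_lt0|li_gt0|li0]; last by rewrite li0 mul0r r_ge0.
  by rewrite mulrC -ler_ndivrMr //; apply: le_bigmax_cond.
rewrite mulrC -ler_pdivlMr //; apply: bigmax_le => [|j lj_lt0].
  exact: bigmin_le_cond.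
exact: lower_le_upper.
Qed.

End Elimination.

Lemma farkas_ord n (I : finType) (M : I -> 'I_n -> R) (b : I -> R) :
  (forall y : I -> R, (forall i, 0 <= y i) -> (forall v, \sum_i y i * M i v = 0) ->
     0 <= \sum_i y i * b i) ->
  exists x : 'I_n -> R, forall i, \sum_v M i v * x v <= b i.
Proof.
elim: n I M b => [|n IH] I M b hM.
  exists (fun=> 0) => i; rewrite big_ord0.
  have := hM (fun i' => (i' == i)%:R); rewrite sum_delta; apply=> [i'|[]//].
  exact: ler0n.
have lift_widen (v : 'I_n) : lift ord_max v = widen_ord (leqnSn n) v.
  by apply: val_inj; rewrite /= /bump leqNgt ltn_ord.
pose l i := M i ord_max.
pose M0 i v := M i (widen_ord (leqnSn n) v).
pose M' k v := \sum_i fm_coef l k i * M0 i v.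
pose b' k := \sum_i fm_coef l k i * b i.
have [x' hx'] : exists x', forall k, \sum_v M' k v * x' v <= b' k.
  apply: IH => y y_ge0 hy; rewrite /b' -sum_comb_mulA; apply: hM.
    by move=> i; apply: sumr_ge0 => k _; rewrite mulr_ge0 ?fm_coef_ge0.
  move=> v; case: (unliftP ord_max v) => [v' ->|->].
    by rewrite lift_widen sum_comb_mulA; apply: hy.
  by rewrite sum_comb_mulA big1 // => k _; rewrite fm_coef_elim mulr0.
pose r i := b i - \sum_v M0 i v * x' v.
have [t ht] : exists t, forall i, l i * t <= r i.
  apply: fm_scalar_solution => k.
  under eq_bigr do rewrite mulrBr.
  by rewrite sumrB -sum_comb_mulA subr_ge0; apply: hx'.
exists (fun v => if unlift ord_max v is Some v' then x' v' else t) => i.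
have unlift_widen v : unlift ord_max (widen_ord (leqnSn n) v) = Some v.
  by rewrite -lift_widen liftK.
rewrite big_ord_recr /= unlift_none.
under eq_bigr do rewrite unlift_widen.
by have := ht i; rewrite /r /l /M0; lra.
Qed.

Lemma farkas (I V : finType) (M : I -> V -> R) (b : I -> R) :
  (forall y : I -> R, (forall i, 0 <= y i) -> (forall v, \sum_i y i * M i v = 0) ->
     0 <= \sum_i y i * b i) ->
  exists x : V -> R, forall i, \sum_v M i v * x v <= b i.
Proof.
move=> hM.
have [x hx] : exists x : 'I_#|V| -> R, forall i, \sum_v M i (enum_val v) * x v <= b i.
  apply: farkas_ord => y y_ge0 hy; apply: hM => // v.
  by rewrite -(enum_rankK v); apply: hy.
exists (fun v => x (enum_rank v)) => i.
rewrite (reindex (@enum_val V predT)) /=; last exact: onW_bij (enum_val_bij V).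
by under eq_bigr do rewrite enum_valK; apply: hx.
Qed.

Lemma farkas_nonneg (I V : finType) (M : I -> V -> R) (b : I -> R) :
  (forall y : I -> R, (forall i, 0 <= y i) -> (forall v, 0 <= \sum_i y i * M i v) ->
     0 <= \sum_i y i * b i) ->
  exists x : V -> R, (forall v, 0 <= x v) /\ forall i, \sum_v M i v * x v <= b i.
Proof.
move=> hM.
pose M' (k : I + V) v := match k with inl i => M i v | inr v' => - (v' == v)%:R end.
pose b' (k : I + V) := if k is inl i then b i else 0.
have [x hx] : exists x, forall k, \sum_v M' k v * x v <= b' k.
  apply: farkas => y y_ge0 hy.
  rewrite big_sumType /= [X in _ + X]big1 ?addr0 => [|v _]; last by rewrite mulr0.
  apply: hM => [i|v]; first exact: y_ge0.
  have := hy v; rewrite big_sumType /= => /eqP; rewrite addr_eq0 => /eqP ->.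
  under eq_bigr do rewrite mulrN mulrC.
  by rewrite sumrN opprK sum_delta y_ge0.
exists x; split=> [v|i]; last exact: hx (inl i).
have := hx (inr v); rewrite /=; under eq_bigr do rewrite eq_sym mulNr.
by rewrite sumrN sum_delta oppr_le0.
Qed.

End FourierMotzkin.

Section LPDuality.
Variables (R : realFieldType) (I V : finType).
Variables (M : I -> V -> R) (b : I -> R) (c : V -> R).

Definition lp_feasible (x : V -> R) : Prop :=
  (forall v, 0 <= x v) /\ (forall i, b i <= \sum_v M i v * x v).

Lemma lp_strong_duality x0 :
  lp_feasible x0 -> (forall x, lp_feasible x -> \sum_v c v * x0 v <= \sum_v c v * x v) ->
  exists y : I -> R, [/\ forall i, 0 <= y i, forall v, \sum_i y i * M i v <= c v &
                         \sum_v c v * x0 v <= \sum_i y i * b i].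
Proof.
move=> [x0_ge0 x0_sat] x0_opt; set cx0 := \sum_v c v * x0 v.
pose N (k : V + 'I_1) i := if k is inl v then M i v else - b i.
pose d (k : V + 'I_1) := if k is inl v then c v else - cx0.
have [y [y_ge0 hy]] : exists y, (forall i, 0 <= y i) /\ forall k, \sum_i N k i * y i <= d k.
  apply: farkas_nonneg => z z_ge0 hz.
  pose w v := z (inl v); pose t := z (inr ord0).
  have t_ge0 : 0 <= t := z_ge0 _.
  have Mw i : t * b i <= \sum_v M i v * w v.
    have := hz i; rewrite big_sumType big_ord1 /=.
    by under eq_bigr do rewrite mulrC; rewrite /w /t => h; lra.
  (* [(w + x0) / (1 + t)] is feasible; comparing its cost with that of [x0] gives the claim. *)
  pose s := (1 + t)^-1; pose x v := s * w v + s * x0 v.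
  have s_gt0 : 0 < s by rewrite invr_gt0; lra.
  have x_feas : lp_feasible x.
    split=> [v|i]; first by rewrite addr_ge0 ?mulr_ge0 ?(ltW s_gt0) ?z_ge0.
    rewrite sum_mul_lincomb -mulrDr ler_pdivlMl; last lra.
    by have := Mw i; have := x0_sat i; lra.
  have := x0_opt x x_feas; rewrite sum_mul_lincomb -mulrDr ler_pdivlMl; last lra.
  rewrite big_sumType big_ord1 /= -/cx0 /w -/t => h.
  by under eq_bigr do rewrite mulrC; lra.
exists y; split=> // [v|].
  by have := hy (inl v); under eq_bigr do rewrite mulrC.
have := hy (inr ord0); rewrite /=; under eq_bigr do rewrite mulNr mulrC.
by rewrite sumrN lerN2.
Qed.

End LPDuality.

Section MarketLP.
Variables (R : realFieldType) (A G C : finType).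
Variables (coef : A -> G -> C -> R) (delay : A -> G -> R).

Definition market_feasible (req : A -> C -> R) (J : pred G) (X : A -> G -> R) : Prop :=
  [/\ forall i k, req i k <= \sum_j coef i j k * X i j, forall i j, 0 <= X i j &
      forall j, J j -> \sum_i X i j <= 1].

Section Encoding.
Variables (req : A -> C -> R) (J : pred G).

(* Supply rows read [- sum_i x (i, j) >= - 1] for [j] in [J] and are void otherwise. *)
Definition market_mx (r : (A * C) + G) (v : A * G) : R :=
  match r with
  | inl (i, k) => (v.1 == i)%:R * coef i v.2 k
  | inr j => - ((v.2 == j) && J j)%:R
  end.

Definition market_rhs (r : (A * C) + G) : R :=
  match r with inl (i, k) => req i k | inr j => - (J j)%:R end.

Lemma market_mx_req i k (x : A * G -> R) :
  \sum_v market_mx (inl (i, k)) v * x v = \sum_j coef i j k * x (i, j).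
Proof.
rewrite sum_pair -(sum_delta i (fun i' => \sum_j coef i j k * x (i', j))).
by apply: eq_bigr => i' _; rewrite mulr_sumr; apply: eq_bigr => j _; rewrite mulrA.
Qed.

Lemma market_mx_supply j (x : A * G -> R) :
  \sum_v market_mx (inr j) v * x v = - ((J j)%:R * \sum_i x (i, j)).
Proof.
rewrite sum_pair mulr_sumr -sumrN; apply: eq_bigr => i _.
rewrite -(sum_delta j (fun j' => - ((J j)%:R * x (i, j')))).
by apply: eq_bigr => j' _ /=; rewrite -mulnb natrM mulNr mulrN mulrA.
Qed.

Lemma market_mx_col i j (y : (A * C) + G -> R) :
  \sum_r y r * market_mx r (i, j) = \sum_k coef i j k * y (inl (i, k)) - (J j)%:R * y (inr j).
Proof.
rewrite big_sumType sum_pair; congr (_ + _).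
  rewrite -(sum_delta i (fun i' => \sum_k coef i j k * y (inl (i', k)))).
  apply: eq_bigr => i' _; rewrite mulr_sumr; apply: eq_bigr => k _ /=.
  by have [->|_] := eqVneq i' i; rewrite /= ?mulr1n ?mulr0n ?mul1r ?mul0r ?mulr0 // mulrC.
rewrite -mulNr -(sum_delta j (fun j' => - (J j')%:R * y (inr j'))).
apply: eq_bigr => j' _ /=.
have [->|_] := eqVneq j' j; rewrite /= ?mulr1n ?mulr0n ?oppr0 ?mul1r ?mul0r ?mulr0 //.
by rewrite mulrN mulNr mulrC.
Qed.

Lemma market_rhs_sum (y : (A * C) + G -> R) :
  \sum_r y r * market_rhs r =
  \sum_i \sum_k req i k * y (inl (i, k)) - \sum_j (J j)%:R * y (inr j).
Proof.
rewrite big_sumType sum_pair -sumrN; congr (_ + _).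
  by apply: eq_bigr => i _; apply: eq_bigr => k _; rewrite mulrC.
by apply: eq_bigr => j _; rewrite mulrN mulrC.
Qed.

Lemma market_cost (mu : A -> R) (x : A * G -> R) :
  \sum_v mu v.1 * delay v.1 v.2 * x v = LP_obj delay mu (fun i j => x (i, j)).
Proof.
rewrite sum_pair; apply: eq_bigr => i _; rewrite mulr_sumr.
by apply: eq_bigr => j _; rewrite mulrA.
Qed.

Lemma lp_feasible_market (x : A * G -> R) :
  lp_feasible market_mx market_rhs x <-> market_feasible req J (fun i j => x (i, j)).
Proof.
split=> [[x_ge0 x_sat]|[x_req x_ge0 x_supply]].
  split=> [i k|i j|j Jj].
  - by have := x_sat (inl (i, k)); rewrite market_mx_req.
  - exact: x_ge0.
  - by have := x_sat (inr j); rewrite market_mx_supply /= Jj mul1r lerN2.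
split=> [[i j]|[[i k]|j]]; rewrite ?market_mx_req ?market_mx_supply //=.
by case: (J j) (x_supply j) => [/(_ isT)|_]; rewrite ?mul1r ?lerN2 ?mul0r.
Qed.

End Encoding.

Lemma market_duality (req : A -> C -> R) (J : pred G) (mu : A -> R) (X : A -> G -> R) :
  market_feasible req J X ->
  (forall Y, market_feasible req J Y -> LP_obj delay mu X <= LP_obj delay mu Y) ->
  exists (alpha : A -> C -> R) (p : G -> R),
    [/\ DLP_feasible coef delay mu alpha p, forall j, ~~ J j -> p j = 0 &
        LP_obj delay mu X <= DLP_obj req alpha p].
Proof.
move=> X_feas X_opt.
have [|x x_feas|y [y_ge0 y_dual y_obj]] :=
  @lp_strong_duality _ _ _ (market_mx J) (market_rhs req J)
    (fun v => mu v.1 * delay v.1 v.2) (fun v => X v.1 v.2).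
- exact/lp_feasible_market.
- by rewrite !market_cost; apply/X_opt/lp_feasible_market.
exists (fun i k => y (inl (i, k))), (fun j => (J j)%:R * y (inr j)); split.
- split=> [i j|i k|j]; last by rewrite mulr_ge0 ?ler0n.
    by have := y_dual (i, j); rewrite market_mx_col.
  exact: y_ge0.
- by move=> j /negbTE ->; rewrite mul0r.
- by move: y_obj; rewrite market_cost market_rhs_sum.
Qed.

End MarketLP.

Section Market.
Variables (R : realFieldType) (A G C : finType).
Variables (coef : A -> G -> C -> R) (req : A -> C -> R) (delay : A -> G -> R).

Definition indicator (Rs : {set A}) (i : A) : R := if i \in Rs then 1 else 0.

Definition used_outside (Rs : {set A}) (X : A -> G -> R) (j : G) : bool :=
  0 < \sum_(i | i \notin Rs) X i j.

Lemma lam_shiftE lam a Rs i : lam_shift lam a Rs i = lam i + a * indicator Rs i.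
Proof. by rewrite /lam_shift /indicator; case: (i \in Rs); rewrite ?mulr1 ?mulr0. Qed.

Lemma LP_obj_indicator Rs X :
  LP_obj delay (indicator Rs) X = \sum_(i in Rs) agent_cost delay X i.
Proof.
rewrite big_mkcond; apply: eq_bigr => i _; rewrite /indicator.
by case: (i \in Rs); rewrite ?mul1r ?mul0r.
Qed.

Lemma LP_obj_shift lam a Rs X :
  LP_obj delay (lam_shift lam a Rs) X =
  LP_obj delay lam X + a * LP_obj delay (indicator Rs) X.
Proof.
rewrite /LP_obj mulr_sumr -big_split; apply: eq_bigr => i _.
by rewrite lam_shiftE mulrDl mulrA.
Qed.

Lemma LP_feasible_market X : LP_feasible coef req X <-> market_feasible coef req predT X.
Proof.
split=> [[X_req [X_ge0 X_supply]]|[X_req X_ge0 X_supply]]; first by split.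
by split=> //; split=> // j; apply: X_supply.
Qed.

Lemma DLP_weak_duality lam alpha p X :
  DLP_feasible coef delay lam alpha p -> LP_feasible coef req X ->
  DLP_obj req alpha p <= LP_obj delay lam X.
Proof.
move=> [dual_ok alpha_ge0 p_ge0] [X_req [X_ge0 X_supply]].
have req_le i : \sum_k req i k * alpha i k <= \sum_j X i j * (lam i * delay i j + p j).
  apply: (@le_trans _ _ (\sum_k (\sum_j X i j * coef i j k) * alpha i k)).
    apply: ler_sum => k _; apply: ler_wpM2r => //.
    by under eq_bigr do rewrite mulrC; apply: X_req.
  rewrite sum_comb_mulA; apply: ler_sum => j _; apply: ler_wpM2l => //.
  by have := dual_ok i j; lra.
have supply_le : \sum_i \sum_j X i j * p j <= \sum_j p j.
  rewrite exchange_big; apply: ler_sum => j _.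
  by rewrite -mulr_suml -[leRHS]mul1r ler_wpM2r.
have cost_split : \sum_i \sum_j X i j * (lam i * delay i j + p j) =
    LP_obj delay lam X + \sum_i \sum_j X i j * p j.
  rewrite /LP_obj -big_split; apply: eq_bigr => i _.
  rewrite /agent_cost mulr_sumr -big_split; apply: eq_bigr => j _ /=; ring.
have : \sum_i \sum_k req i k * alpha i k <= \sum_i \sum_j X i j * (lam i * delay i j + p j).
  by apply: ler_sum => i _; apply: req_le.
by rewrite cost_split /DLP_obj; lra.
Qed.

Lemma DLP_optimal_of_gap lam alpha p X :
  DLP_feasible coef delay lam alpha p -> LP_feasible coef req X ->
  LP_obj delay lam X <= DLP_obj req alpha p -> DLP_optimal coef req delay lam alpha p.
Proof.
move=> dual_feas X_feas gap; split=> // alpha0 p0 dual_feas0.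
exact: le_trans (DLP_weak_duality dual_feas0 X_feas) gap.
Qed.

Lemma LP_obj_le_DLP_obj lam X alpha p :
  LP_optimal coef req delay lam X -> DLP_optimal coef req delay lam alpha p ->
  LP_obj delay lam X <= DLP_obj req alpha p.
Proof.
move=> [X_feas X_opt] [_ dual_opt].
have [|Y Y_feas|alpha0 [p0 [dual_feas0 _ gap]]] :=
  @market_duality _ _ _ _ coef delay req predT lam X.
- exact/LP_feasible_market.
- exact/X_opt/LP_feasible_market.
exact: le_trans gap (dual_opt _ _ dual_feas0).
Qed.

Lemma DLP_feasible_shift lam a Rs alpha p beta q :
  0 <= a -> DLP_feasible coef delay lam alpha p ->
  DLP_feasible coef delay (indicator Rs) beta q ->
  DLP_feasible coef delay (lam_shift lam a Rs)
    (fun i k => alpha i k + a * beta i k) (fun j => p j + a * q j).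
Proof.
move=> a_ge0 [alpha_ok alpha_ge0 p_ge0] [beta_ok beta_ge0 q_ge0].
split=> [i j|i k|j]; rewrite ?addr_ge0 ?mulr_ge0 //.
rewrite sum_mul_addZ lam_shiftE mulrDl -mulrA.
have := ler_wpM2l a_ge0 (beta_ok i j); have := alpha_ok i j; lra.
Qed.

Lemma DLP_obj_shift a (alpha beta : A -> C -> R) (p q : G -> R) :
  DLP_obj req (fun i k => alpha i k + a * beta i k) (fun j => p j + a * q j) =
  DLP_obj req alpha p + a * DLP_obj req beta q.
Proof.
rewrite /DLP_obj big_split /= -mulr_sumr.
under eq_bigr do rewrite sum_mul_addZ.
by rewrite big_split /= -mulr_sumr; ring.
Qed.

Lemma jointly_optimal_LP_obj Rs X Y :
  jointly_optimal coef req delay Rs X -> LP_feasible coef req Y ->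
  LP_obj delay (indicator Rs) X <= LP_obj delay (indicator Rs) Y.
Proof.
move=> [_ _ X_opt] [Y_req [Y_ge0 Y_le1]]; rewrite !LP_obj_indicator.
by apply: X_opt => [i _|]; split; [apply: Y_req | apply: Y_ge0 | |].
Qed.

(* Jointly optimal for [Rs] means optimal only against allocations leaving the other
   agents' goods alone; still, small steps towards an allocation respecting supply
   merely on the goods those agents do not use stay feasible, so by convexity [X] is
   optimal for that relaxation as well. *)
Lemma restricted_optimal Rs X Y :
  LP_feasible coef req X -> jointly_optimal coef req delay Rs X ->
  market_feasible coef (fun i k => if i \in Rs then req i k else 0)
    (fun j => ~~ used_outside Rs X j) Y ->
  \sum_(i in Rs) agent_cost delay X i <= \sum_(i in Rs) agent_cost delay Y i.
Proof.
move=> [X_req [X_ge0 X_supply]] [_ _ X_opt] [Y_req Y_ge0 Y_supply].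
pose n j := \sum_(i | i \notin Rs) X i j.
have [t [t_gt0 t_le1 t_small]] :=
  @exists_small_step _ _ (used_outside Rs X) n (fun j => \sum_(i in Rs) Y i j)
    (fun j used => used) (fun j => sumr_ge0 _ (fun i _ => Y_ge0 i j)).
pose Z i j := if i \in Rs then (1 - t) * X i j + t * Y i j else 0.
have Z_ge0 i j : 0 <= Z i j.
  by rewrite /Z; case: ifP => // _; have := X_ge0 i j; have := Y_ge0 i j; nra.
have Z_CC i : i \in Rs -> CC coef req i Z.
  move=> iRs; split=> // k; rewrite /Z iRs sum_mul_lincomb.
  by have := X_req i k; have := Y_req i k; rewrite iRs; nra.
have Z_supply : supply_respecting Z.
  split=> // j; rewrite /Z -big_mkcond /= big_split /= -!mulr_sumr.
  have X_split : \sum_(i in Rs) X i j + n j <= 1.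
    by have := X_supply j; rewrite (bigID (mem Rs)) /=.
  have X_in_ge0 : 0 <= \sum_(i in Rs) X i j by apply: sumr_ge0.
  have n_ge0 : 0 <= n j by apply: sumr_ge0.
  have [used|unused] := boolP (used_outside Rs X j); first by have := t_small j used; nra.
  have : \sum_(i in Rs) Y i j <= 1.
    apply: le_trans (Y_supply j unused); rewrite [leRHS](bigID (mem Rs)) /= lerDl.
    by apply: sumr_ge0.
  nra.
have := X_opt Z Z_CC Z_supply.
have -> : \sum_(i in Rs) agent_cost delay Z i =
    (1 - t) * \sum_(i in Rs) agent_cost delay X i + t * \sum_(i in Rs) agent_cost delay Y i.
  rewrite !mulr_sumr -big_split; apply: eq_bigr => i iRs.
  by rewrite /agent_cost /Z iRs sum_mul_lincomb.
nra.
Qed.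

Lemma restricted_dual Rs X :
  LP_feasible coef req X -> jointly_optimal coef req delay Rs X ->
  exists (beta : A -> C -> R) (q : G -> R),
    [/\ DLP_feasible coef delay (indicator Rs) beta q,
        forall j, used_outside Rs X j -> q j = 0,
        forall i k, i \notin Rs -> beta i k = 0 &
        LP_obj delay (indicator Rs) X <= DLP_obj req beta q].
Proof.
move=> X_feas X_jo; have [X_req [X_ge0 X_supply]] := X_feas.
pose req_in i k := if i \in Rs then req i k else 0.
pose X_in i j := if i \in Rs then X i j else 0.
have X_in_obj : LP_obj delay (indicator Rs) X_in = LP_obj delay (indicator Rs) X.
  by rewrite !LP_obj_indicator; apply: eq_bigr => i iRs; rewrite /agent_cost /X_in iRs.
have X_in_feas : market_feasible coef req_in (fun j => ~~ used_outside Rs X j) X_in.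
  split=> [i k|i j|j _]; rewrite /req_in /X_in.
  - by case: (i \in Rs); [apply: X_req | rewrite big1 // => j _; rewrite mulr0].
  - by case: (i \in Rs).
  - by apply: le_trans (X_supply j); apply: ler_sum => i _; case: ifP.
have [Y Y_feas|alpha [q [[alpha_ok alpha_ge0 q_ge0] q_unused gap]]] :=
  @market_duality _ _ _ _ coef delay req_in _ (indicator Rs) X_in X_in_feas.
  by rewrite X_in_obj !LP_obj_indicator; apply: restricted_optimal.
exists (fun i k => if i \in Rs then alpha i k else 0), q; split.
- split=> // [i j|i k]; last by case: ifP.
  have := alpha_ok i j; rewrite /indicator.
  case: (i \in Rs) => // _; rewrite big1 => [|k _]; last by rewrite mulr0.
  by rewrite sub0r mul0r oppr_le0.
- by move=> j used; apply: q_unused; rewrite negbK.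
- by move=> i k /negbTE ->.
- suff -> : DLP_obj req (fun i k => if i \in Rs then alpha i k else 0) q =
             DLP_obj req_in alpha q by rewrite -X_in_obj.
  congr (_ - _); apply: eq_bigr => i _; apply: eq_bigr => k _.
  by rewrite /req_in; case: (i \in Rs); rewrite ?mul0r ?mulr0.
Qed.

End Market.

Theorem lemma4p4 (R : realFieldType) (A G C : finType)
  (coef : A -> G -> C -> R) (req : A -> C -> R) (delay : A -> G -> R)
  (hreq : forall i k, 0 <= req i k) (hdelay : forall i j, 0 <= delay i j)
  (hext : extensibility coef req delay)
  (lam : A -> R) (hlam : forall i, 0 < lam i)
  (Rs : {set A}) (hRs : Rs \subset top_class lam)
  (Xh : A -> G -> R) (hXopt : LP_optimal coef req delay lam Xh)
  (hXjo : jointly_optimal coef req delay Rs Xh)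
  (alphah : A -> C -> R) (ph : G -> R) (hdual : DLP_optimal coef req delay lam alphah ph)
  (a : R) (ha : 0 < a) :
  LP_optimal coef req delay (lam_shift lam a Rs) Xh /\
  exists (alpha' : A -> C -> R) (p' : G -> R),
    [/\ DLP_optimal coef req delay (lam_shift lam a Rs) alpha' p',
        (forall j, ph j <= p' j),
        (forall j, 0 < \sum_(i | i \notin Rs) Xh i j -> p' j = ph j) &
        (forall i k, i \notin Rs -> alpha' i k = alphah i k)].
Proof.
have [X_feas X_opt] := hXopt.
have [beta [q [beta_feas q_unused beta_out gap]]] := restricted_dual X_feas hXjo.
split.
  split=> // Y Y_feas; rewrite !LP_obj_shift.
  exact: lerD (X_opt Y Y_feas) (ler_wpM2l (ltW ha) (jointly_optimal_LP_obj hXjo Y_feas)).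
exists (fun i k => alphah i k + a * beta i k), (fun j => ph j + a * q j); split.
- apply: DLP_optimal_of_gap X_feas _; first exact: DLP_feasible_shift (ltW ha) hdual.1 beta_feas.
  rewrite LP_obj_shift DLP_obj_shift.
  exact: lerD (LP_obj_le_DLP_obj hXopt hdual) (ler_wpM2l (ltW ha) gap).
- by have [_ _ q_ge0] := beta_feas; move=> j; rewrite lerDl mulr_ge0 ?(ltW ha) ?q_ge0.
- by move=> j /q_unused ->; rewrite mulr0 addr0.
- by move=> i k /beta_out ->; rewrite mulr0 addr0.
Qed.
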